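(* Let $G$ be a connected graph. If $G_{\rm SR}\cong K_1+(aK_2\cup bK_1)$ where either $a\ge 1$ and $b\ge 0$, or $a=0$ and $b\ge 2$, then $O_{\rm SR}(G)=\mathcal{N}$.
   Context: All graphs are finite, simple and undirected; $d(x,y)$ is the shortest-path distance. $aK_2\cup bK_1$ is the disjoint union of $a$ copies of $K_2$ and $b$ isolated vertices; the join $X+Y$ is obtained from the disjoint union of $X$ and $Y$ by adding all edges between $V(X)$ and $V(Y)$. A set $S\subseteq V(G)$ is a strong resolving set of a connected graph $G$ if for all distinct $x,y\in V(G)$ there exists $z\in S$ such that $x$ lies on a $y$–$z$ geodesic or $y$ lies on an $x$–$z$ geodesic. A vertex $u$ is maximally distant from $v$ if $d(u,v)\ge d(w,v)$ for every neighbor $w$ of $u$; $u,v$ are mutually maximally distant (MMD) if each is maximally distant from the other. The strong resolving graph $G_{\rm SR}$ has vertex set $\{x: x\text{ is MMD with some }y\}$ and edges exactly the MMD pairs. The Maker–Breaker strong resolving game on $G$: Maker and Breaker alternately select a not-yet-chosen vertex of $G$; Maker wins if the vertices he selects contain a strong resolving set of $G$, Breaker wins otherwise. In the M-game Maker moves first, in the B-game Breaker moves first. $O_{\rm SR}(G)=\mathcal{M}$ if Maker has a winning strategy in both games, $\mathcal{B}$ if Breaker has a winning strategy in both, and $\mathcal{N}$ if the first player has a winning strategy in each. *)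

From mathcomp Require Import all_boot.
Set Implicit Arguments. Unset Strict Implicit. Unset Printing Implicit Defensive.

Section Graph.
Variable T : finType.
Variable e : rel T.

Definition simple_graph := symmetric e /\ irreflexive e.
Definition connected_graph := forall x y : T, connect e x y.

Fixpoint ball (n : nat) (x : T) : {set T} :=
  match n with
  | 0 => [set x]
  | n'.+1 => ball n' x :|: [set y | [exists z in ball n' x, e z y]]
  end.

(* shortest-path distance: least n with y in ball n x
   (for connected graphs some n <= #|T| works) *)
Definition dist (x y : T) : nat := find (fun n => y \in ball n x) (iota 0 #|T|.+1).

Definition on_geodesic (y x z : T) : bool := dist y x + dist x z == dist y z.

Definition strong_resolving (S : {set T}) : bool :=
  [forall x, forall y, (x != y) ==>
     [exists z in S, on_geodesic y x z || on_geodesic x y z]].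

Definition max_distant (u v : T) : bool :=
  [forall w, e u w ==> (dist w v <= dist u v)].

Definition MMD (u v : T) : bool := (u != v) && max_distant u v && max_distant v u.

(* vertex set of the strong resolving graph G_SR; its edges are MMD pairs *)
Definition VSR : {set T} := [set x | [exists y, MMD x y]].

(* Maker-Breaker strong resolving game: M = Maker's vertices, B = Breaker's,
   mt = Maker to move. Game continues until all vertices are chosen; Maker
   wins iff his vertices contain (equivalently, since the property is
   monotone, form) a strong resolving set. [fuel] only bounds recursion. *)
Fixpoint maker_wins (fuel : nat) (M B : {set T}) (mt : bool) : bool :=
  match fuel with
  | 0 => strong_resolving M
  | f.+1 =>
    let F := ~: (M :|: B) in
    if F == set0 then strong_resolving M
    else if mt then [exists v in F, maker_wins f (v |: M) B false]
    else [forall v in F, maker_wins f M (v |: B) true]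
  end.

Definition maker_wins_M_game : bool := maker_wins #|T| set0 set0 true.
Definition maker_wins_B_game : bool := maker_wins #|T| set0 set0 false.

End Graph.

Inductive outcome := Out_M | Out_B | Out_N | Out_P.

(* O_SR(G): M = Maker wins both, B = Breaker wins both,
   N = first player wins each, P = second player wins each *)
Definition O_SR (T : finType) (e : rel T) : outcome :=
  match maker_wins_M_game e, maker_wins_B_game e with
  | true, true => Out_M
  | false, false => Out_B
  | true, false => Out_N
  | false, true => Out_P
  end.

(* The graph K_1 + (a K_2 u b K_1): vertex None is the K_1 joined to all;
   Some (inl (i, s)) are the endpoints of the i-th K_2; Some (inr j) are
   the b isolated vertices of aK_2 u bK_1. *)
Definition HV (a b : nat) := option (('I_a * bool) + 'I_b)%type.

Definition Hrel (a b : nat) : rel (HV a b) := fun u v =>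
  match u, v with
  | None, Some _ => true
  | Some _, None => true
  | Some (inl (i, s)), Some (inl (j, t)) => (i == j) && (s != t)
  | _, _ => false
  end.

Definition GSR_iso (T : finType) (e : rel T) (HT : finType) (h : rel HT) : Prop :=
  exists f : T -> HT,
    {in VSR e &, injective f} /\
    (forall y : HT, exists2 x, x \in VSR e & f x = y) /\
    {in VSR e &, forall u v, MMD e u v = h (f u) (f v)}.

Arguments Hrel a b : clear implicits.

From mathcomp Require Import all_boot zify.
Set Implicit Arguments. Unset Strict Implicit. Unset Printing Implicit Defensive.

(* A set of vertices is strongly resolving exactly when it meets every MMD
   pair, i.e. when it is a vertex cover of G_SR.  Removing the hub of
   K_1 + (aK_2 u bK_1) leaves a matching, so Maker moving first takes the hub
   and then answers each Breaker move by the matching partner of Breaker's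
   vertex.  Breaker moving first takes the hub; whatever Maker answers, one of
   two further neighbours of the hub in G_SR is still free, and Breaker takes
   it, owning a whole MMD pair. *)

Section Distance.
Variables (T : finType) (e : rel T).
Hypothesis e_sym : symmetric e.
Hypothesis e_conn : connected_graph e.

Lemma ball_subset m n x : m <= n -> ball e m x \subset ball e n x.
Proof.
elim: n => [|n IHn]; first by rewrite leqn0 => /eqP ->.
rewrite leq_eqVlt => /orP [/eqP -> // | /IHn sub_mn].
exact: subset_trans sub_mn (subsetUl _ _).
Qed.

Lemma ball_edge n x y z : y \in ball e n x -> e y z -> z \in ball e n.+1 x.
Proof.
by move=> yx eyz; rewrite /= !inE; apply/orP; right; apply/existsP; exists y; rewrite yx.
Qed.

Lemma ball_add m n x y z :
  y \in ball e m x -> z \in ball e n y -> z \in ball e (m + n) x.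
Proof.
move=> yx; elim: n z => [|n IHn] z; first by rewrite addn0 inE => /eqP ->.
rewrite addnS => /setUP [/IHn | ]; first exact: (subsetP (ball_subset _ (leqnSn _))).
by rewrite inE => /existsP [w /andP [/IHn wx ewz]]; apply: ball_edge wx ewz.
Qed.

Lemma ball_sym n x y : (y \in ball e n x) = (x \in ball e n y).
Proof.
suff sym_n u v : v \in ball e n u -> u \in ball e n v by apply/idP/idP; apply: sym_n.
elim: n u v => [|n IHn] u v; first by rewrite !inE eq_sym.
case/setUP => [/IHn | ]; first exact: (subsetP (ball_subset _ (leqnSn _))).
rewrite inE => /existsP [w /andP [/IHn uw ewv]].
have wv : w \in ball e 1 v by apply: (@ball_edge 0 v v); rewrite ?inE // e_sym.
by rewrite -add1n; apply: ball_add wv uw.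
Qed.

Lemma ball_card x y : y \in ball e #|T| x.
Proof.
have /connectP [p xp ->] := e_conn x y.
case: (shortenP xp) => q xq uq _.
have last_q : last x q \in ball e (size q) x.
  elim/last_ind: q xq {uq} => [|q z IHq]; first by rewrite inE.
  by rewrite rcons_path last_rcons size_rcons => /andP [/IHq]; apply: ball_edge.
apply: (subsetP (ball_subset _ _)) last_q.
by have := max_card (mem (x :: q)); rewrite (card_uniqP uq) => /ltnW.
Qed.

Lemma mem_ball n x y : (y \in ball e n x) = (dist e x y <= n).
Proof.
rewrite /dist; set P := fun n => y \in ball e n x.
have has_P : has P (iota 0 #|T|.+1).
  by apply/hasP; exists #|T|; [rewrite mem_iota add0n ltnSn | exact: ball_card].
have find_lt := has_P; rewrite has_find size_iota in find_lt.
apply/idP/idP => [yx | ].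
  rewrite leqNgt; apply/negP => n_lt.
  have := before_find 0 n_lt; rewrite nth_iota ?(ltn_trans n_lt) //.
  by rewrite /P yx.
have := nth_find 0 has_P; rewrite nth_iota // add0n => yx le_n.
exact: (subsetP (ball_subset _ le_n)).
Qed.

Lemma ball_dist x y : y \in ball e (dist e x y) x.
Proof. by rewrite mem_ball. Qed.

Lemma dist_eq0 x y : (dist e x y == 0) = (x == y).
Proof. by rewrite -leqn0 -mem_ball inE eq_sym. Qed.

Lemma distxx x : dist e x x = 0.
Proof. by apply/eqP; rewrite dist_eq0. Qed.

Lemma distC x y : dist e x y = dist e y x.
Proof. by apply/eqP; rewrite eqn_leq -!mem_ball ball_sym ball_dist /= ball_sym ball_dist. Qed.

Lemma dist_triangle x y z : dist e x z <= dist e x y + dist e y z.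
Proof. by rewrite -mem_ball; apply: ball_add; apply: ball_dist. Qed.

Lemma dist_edge x y : e x y -> dist e x y <= 1.
Proof. by move=> exy; rewrite -mem_ball; apply: (@ball_edge 0 x x); rewrite ?inE. Qed.

Lemma dist_neighbour u w v : e u w -> dist e w v <= (dist e u v).+1.
Proof.
by move=> euw; have := dist_triangle w u v; have := dist_edge euw; rewrite distC; lia.
Qed.

Lemma dist_pred x z n : dist e x z = n.+1 -> exists2 w, e w z & dist e x w = n.
Proof.
move=> dxz; have := ball_dist x z; rewrite dxz => /setUP [].
  by rewrite mem_ball dxz ltnn.
rewrite inE => /existsP [w /andP [wx ewz]]; exists w => //.
move: wx; rewrite mem_ball; have := dist_triangle x w z; have := dist_edge ewz; lia.
Qed.

Lemma MMD_sym u v : MMD e u v = MMD e v u.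
Proof. by rewrite /MMD eq_sym -!andbA [max_distant e u v && _]andbC. Qed.

(* Take [s] farthest from [q] among the vertices [s] such that [p] lies on an
   [s]-[q] geodesic: a neighbour of [s] farther from [q] would also qualify. *)
Lemma max_distant_beyond p q :
  exists2 s, dist e s q = dist e s p + dist e p q & max_distant e s q.
Proof.
pose beyond := [pred s | dist e s q == dist e s p + dist e p q].
have beyond_p : beyond p by rewrite /beyond /= distxx.
have [s /eqP dsq s_far] := arg_maxnP (fun s => dist e s q) beyond_p.
exists s => //; apply/forallP => w; apply/implyP => esw; rewrite leqNgt; apply/negP => far_w.
have dwq := dist_triangle w p q; have dwp := dist_neighbour p esw.
have beyond_w : beyond w by rewrite /beyond /=; apply/eqP; lia.
by have := s_far w beyond_w; lia.
Qed.

Lemma max_distant_off_geodesic u v z :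
  max_distant e u v -> z != u -> ~~ on_geodesic e v u z.
Proof.
move=> u_far zu; case duz: (dist e u z) => [|k].
  by move/eqP: duz; rewrite dist_eq0 eq_sym (negbTE zu).
rewrite distC in duz; have [w ewu dzw] := dist_pred duz.
have := forallP u_far w; rewrite e_sym ewu /=.
have := dist_triangle v w z.
by rewrite /on_geodesic (distC u z) duz (distC v w) (distC w z) dzw (distC v u); lia.
Qed.

(* Extending [x] beyond [y] to [w], and then [y] beyond [w] to [t], yields an
   MMD pair [w], [t] with [x] on a [w]-[y] geodesic and [y] on a [t]-[x] one. *)
Lemma MMD_cover_strong_resolving (M : {set T}) :
  (forall u v, MMD e u v -> (u \in M) || (v \in M)) -> strong_resolving e M.
Proof.
move=> cover; apply/forallP => x; apply/forallP => y; apply/implyP => xy.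
have [w dwy w_far] := max_distant_beyond x y.
have [t dtw t_far] := max_distant_beyond y w.
have w_far_t : max_distant e w t.
  apply/forallP => w'; apply/implyP => ew'; have := forallP w_far w'; rewrite ew' /=.
  have := dist_triangle w' y t; rewrite (distC y t) (distC w t) dtw (distC y w); lia.
have dxy : 0 < dist e x y by rewrite lt0n dist_eq0.
have wt : w != t.
  by apply: contraTneq dxy => wt; move: dtw dwy; rewrite wt distxx (distC y t); lia.
have /cover/orP [wM | tM] : MMD e w t by rewrite /MMD wt w_far_t t_far.
  apply/existsP; exists w; rewrite wM /on_geodesic.
  by rewrite (distC y x) (distC x w) (distC y w) dwy addnC eqxx.
apply/existsP; exists t; rewrite tM /on_geodesic orbC.
have := dist_triangle t x w; have := dist_triangle x y t.
move: dtw dwy; rewrite (distC t x) (distC t y) (distC w x) (distC y w).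
by move=> *; apply/eqP; lia.
Qed.

Lemma strong_resolvingP (M : {set T}) :
  reflect (forall u v, MMD e u v -> (u \in M) || (v \in M)) (strong_resolving e M).
Proof.
apply: (iffP idP) => [sr u v | ]; last exact: MMD_cover_strong_resolving.
rewrite /MMD => /andP [/andP [uv u_far] v_far]; apply/negPn/negP.
rewrite negb_or => /andP [uM vM].
have := forallP (forallP sr u) v; rewrite uv => /existsP [z /andP [zM /orP [geo | geo]]].
- by apply: negP (max_distant_off_geodesic u_far _) geo; apply: contraNneq uM => <-.
- by apply: negP (max_distant_off_geodesic v_far _) geo; apply: contraNneq vM => <-.
Qed.

End Distance.

Section Game.
Variables (T : finType) (e : rel T).
Hypothesis e_sym : symmetric e.
Hypothesis e_conn : connected_graph e.

Definition free (M B : {set T}) : {set T} := ~: (M :|: B).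

Lemma in_free x (M B : {set T}) : (x \in free M B) = (x \notin M) && (x \notin B).
Proof. by rewrite !inE negb_or. Qed.

Lemma free_setU1l v (M B : {set T}) : free (v |: M) B = free M B :\ v.
Proof. by apply/setP => z; rewrite !inE -orbA negb_or. Qed.

Lemma free_setU1r v (M B : {set T}) : free M (v |: B) = free M B :\ v.
Proof. by apply/setP => z; rewrite !inE orbCA negb_or. Qed.

Lemma card_free_setU1l v (M B : {set T}) :
  v \in free M B -> #|free (v |: M) B| = #|free M B|.-1.
Proof. by move=> vF; rewrite free_setU1l (cardsD1 v (free M B)) vF. Qed.

Lemma card_free_setU1r v (M B : {set T}) :
  v \in free M B -> #|free M (v |: B)| = #|free M B|.-1.
Proof. by move=> vF; rewrite free_setU1r (cardsD1 v (free M B)) vF. Qed.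

Lemma maker_wins_over n (M B : {set T}) mt :
  free M B = set0 -> maker_wins e n M B mt = strong_resolving e M.
Proof. by case: n => //= n; rewrite -/(free M B) => ->; rewrite eqxx. Qed.

Lemma maker_winsS_maker n (M B : {set T}) : free M B != set0 ->
  maker_wins e n.+1 M B true = [exists v in free M B, maker_wins e n (v |: M) B false].
Proof. by rewrite /= -/(free M B) => /negbTE ->. Qed.

Lemma maker_winsS_breaker n (M B : {set T}) : free M B != set0 ->
  maker_wins e n.+1 M B false = [forall v in free M B, maker_wins e n M (v |: B) true].
Proof. by rewrite /= -/(free M B) => /negbTE ->. Qed.

Lemma breaker_owns_MMD_pair u w n (M B : {set T}) mt :
  MMD e u w -> u \in B -> w \in B -> u \notin M -> w \notin M ->
  ~~ maker_wins e n M B mt.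
Proof.
move=> uw; have lost (M' : {set T}) : u \notin M' -> w \notin M' -> ~~ strong_resolving e M'.
  move=> uM wM; apply/(strong_resolvingP e_sym e_conn) => /(_ u w uw).
  by rewrite (negbTE uM) (negbTE wM).
elim: n M B mt => [|n IHn] M B mt uB wB uM wM; first exact: lost.
have [F0 | Fn0] := eqVneq (free M B) set0; first by rewrite maker_wins_over // lost.
case: mt.
  rewrite maker_winsS_maker //; apply/existsP => -[x /andP [xF]]; apply/negP.
  have xB : x \notin B by move: xF; rewrite in_free => /andP [].
  by apply: IHn; rewrite // !inE negb_or ?uM ?wM andbT; apply: contraNneq xB => <-.
rewrite maker_winsS_breaker // negb_forall; have /set0Pn [x xF] := Fn0.
apply/existsP; exists x; rewrite negb_imply xF andTb.
by apply: IHn; rewrite // inE ?uB ?wB orbT.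
Qed.

Section MakerStrategy.
Variable W : {set T} -> {set T} -> Prop.
Hypothesis W_over : forall M B, W M B -> free M B = set0 -> strong_resolving e M.
Hypothesis W_setU1l : forall v M B, W M B -> W (v |: M) B.
Hypothesis W_reply : forall v M B, W M B -> v \in free M B ->
  W M (v |: B) \/ exists2 w, w \in free M (v |: B) & W (w |: M) (v |: B).

Lemma maker_wins_from n M B :
  #|free M B| <= n -> W M B -> maker_wins e n M B false.
Proof.
elim/ltn_ind: n M B => -[|n] IHn M B Fn WMB.
  by apply: W_over WMB _; apply: cards0_eq; move: Fn; rewrite leqn0 => /eqP.
have [F0 | Fn0] := eqVneq (free M B) set0; first by rewrite maker_wins_over // (W_over WMB).
rewrite maker_winsS_breaker //; apply/forallP => v; apply/implyP => vF.
have [F'0 | F'n0] := eqVneq (free M (v |: B)) set0.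
  rewrite maker_wins_over //; have [WMB' | [w]] := W_reply WMB vF.
    exact: W_over WMB' F'0.
  by rewrite F'0 inE.
have [w wF' Ww] : exists2 w, w \in free M (v |: B) & W (w |: M) (v |: B).
  case: (W_reply WMB vF) => // WMB'.
  by have /set0Pn [w wF'] := F'n0; exists w => //; apply: W_setU1l.
have F'n : #|free M (v |: B)| <= n by rewrite card_free_setU1r //; lia.
case: n IHn Fn F'n => [|n] IHn Fn F'n.
  by move: F'n0; rewrite -card_gt0; lia.
rewrite maker_winsS_maker //; apply/existsP; exists w; rewrite wF' /=.
by apply: IHn Ww; rewrite ?card_free_setU1l //; lia.
Qed.

End MakerStrategy.

Section Pairing.
Variable c : T.
Hypothesis partner_unique : forall v w1 w2, v != c -> w1 != c -> w2 != c ->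
  MMD e v w1 -> MMD e v w2 -> w1 = w2.

Definition pairing_position (M B : {set T}) : Prop :=
  c \in M /\ forall u v, MMD e u v -> u \in B -> v \in M.

Lemma pairing_position_over M B :
  pairing_position M B -> free M B = set0 -> strong_resolving e M.
Proof.
move=> [_ paired] F0; apply/(strong_resolvingP e_sym e_conn) => u v uv.
have : u \notin free M B by rewrite F0 inE.
by rewrite in_free negb_and !negbK; case: (u \in M) => //= /(paired u v uv).
Qed.

Lemma pairing_position_setU1l v M B :
  pairing_position M B -> pairing_position (v |: M) B.
Proof.
move=> [cM paired]; split; first by rewrite inE cM orbT.
by move=> u w uw /(paired u w uw) wM; rewrite inE wM orbT.
Qed.

Lemma pairing_reply v M B : pairing_position M B -> v \in free M B ->
  pairing_position M (v |: B) \/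
  exists2 w, w \in free M (v |: B) & pairing_position (w |: M) (v |: B).
Proof.
move=> [cM paired]; rewrite in_free => /andP [vM vB].
have notc x : x \notin M -> x != c by apply: contraNneq => ->.
case: (pickP [pred w | MMD e v w && (w \notin M)]) => [w /andP [vw wM] | partners_in_M].
  right; exists w.
    have wB : w \notin B by apply: contra vM => wB; apply: paired wB; rewrite MMD_sym.
    have wv : w != v by move: vw; rewrite /MMD eq_sym => /andP [/andP []].
    by rewrite in_free wM !inE negb_or wv.
  split; first by rewrite inE cM orbT.
  move=> u x ux /setU1P [uv | uB]; last by rewrite inE (paired u x ux uB) orbT.
  rewrite uv in ux; rewrite !inE; case xM: (x \in M); rewrite ?orbT //.
  by rewrite (partner_unique (notc v vM) (notc x (negbT xM)) (notc w wM) ux vw) eqxx.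
left; split => // u x ux /setU1P [uv | ]; last exact: paired.
by have := partners_in_M x; rewrite /= -uv ux => /negbFE.
Qed.

Lemma maker_wins_M_game_pairing : maker_wins_M_game e.
Proof.
rewrite /maker_wins_M_game.
have cF : c \in free set0 set0 by rewrite in_free !inE.
have : 0 < #|T| by apply/card_gt0P; exists c.
case Tn: #|T| => [//|n] _.
rewrite maker_winsS_maker; last by apply/set0Pn; exists c.
apply/existsP; exists c; rewrite cF /=; apply: (maker_wins_from pairing_position_over).
- exact: pairing_position_setU1l.
- exact: pairing_reply.
- by rewrite card_free_setU1l // /free setU0 setC0 cardsT Tn.
- by split => [|u v _]; rewrite !inE ?eqxx.
Qed.

End Pairing.

Lemma breaker_wins_B_game_two_partners c w1 w2 :
  MMD e c w1 -> MMD e c w2 -> w1 != w2 -> ~~ maker_wins_B_game e.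
Proof.
move=> cw1 cw2 w12.
have w_c w : MMD e c w -> w != c by rewrite /MMD eq_sym => /andP [/andP []].
have : #|c |: [set w1; w2]| <= #|T| by apply: max_card.
rewrite cardsU1 cards2 w12 !inE negb_or !(eq_sym c) (w_c w1 cw1) (w_c w2 cw2).
rewrite /maker_wins_B_game; case: #|T| => [|[|[|n]]] // _.
have cF : c \in free set0 set0 by rewrite in_free !inE.
rewrite maker_winsS_breaker; last by apply/set0Pn; exists c.
rewrite negb_forall; apply/existsP; exists c; rewrite negb_imply cF andTb.
have w1F : w1 \in free set0 (c |: set0) by rewrite in_free !inE /= orbF (w_c w1 cw1).
rewrite maker_winsS_maker; last by apply/set0Pn; exists w1.
apply/negP => /existsP [x /andP [xF]]; apply/negP.
pose w := if x == w1 then w2 else w1.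
have cw : MMD e c w by rewrite /w; case: ifP.
have wx : w != x by rewrite /w; case: ifP => [/eqP -> | /negbT]; rewrite eq_sym.
have wF : w \in free (x |: set0) (c |: set0).
  by rewrite in_free !inE !orbF wx (w_c w cw).
rewrite maker_winsS_breaker; last by apply/set0Pn; exists w.
rewrite negb_forall; apply/existsP; exists w; rewrite negb_imply wF andTb.
apply: breaker_owns_MMD_pair cw _ _ _ _; rewrite !inE ?eqxx ?orbT ?orbF ?(negbTE wx) //.
by apply: contraTneq xF => ->; rewrite in_free !inE eqxx.
Qed.

End Game.

Lemma Hrel_hub a b (y : HV a b) : y != None -> Hrel a b None y.
Proof. by case: y. Qed.

Lemma Hrel_partner_unique a b (u y1 y2 : HV a b) :
  u != None -> y1 != None -> y2 != None -> Hrel a b u y1 -> Hrel a b u y2 -> y1 = y2.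
Proof.
case: u y1 y2 => [[[i s] | j] | ] // [[[i1 s1] | j1] | ] // [[[i2 s2] | j2] | ] // _ _ _.
by case/andP => /eqP <- s1s /andP [/eqP <- s2s]; move: s1s s2s; case: s; case: s1; case: s2.
Qed.

Lemma HV_two_leaves a b : (0 < a) || (1 < b) ->
  exists y1 y2 : HV a b, [/\ y1 != None, y2 != None & y1 != y2].
Proof.
case/orP => [a_gt0 | b_gt1].
  by exists (Some (inl (Ordinal a_gt0, false))), (Some (inl (Ordinal a_gt0, true))).
by exists (Some (inr (Ordinal (ltnW b_gt1)))), (Some (inr (Ordinal b_gt1))).
Qed.

Lemma MMD_VSR (T : finType) (e : rel T) u v : MMD e u v -> u \in VSR e.
Proof. by move=> uv; rewrite inE; apply/existsP; exists v. Qed.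

Section Isomorphism.
Variables (T : finType) (e : rel T) (a b : nat) (f : T -> HV a b).
Hypothesis f_inj : {in VSR e &, injective f}.
Hypothesis f_onto : forall y, exists2 x, x \in VSR e & f x = y.
Hypothesis f_MMD : {in VSR e &, forall u v, MMD e u v = Hrel a b (f u) (f v)}.
Variable c : T.
Hypotheses (cV : c \in VSR e) (fc : f c = None).

Lemma f_neq_None x : x \in VSR e -> x != c -> f x != None.
Proof. by move=> xV; apply: contraNneq => fx; apply/eqP/f_inj; rewrite ?fx. Qed.

Lemma MMD_partner_unique v w1 w2 : v != c -> w1 != c -> w2 != c ->
  MMD e v w1 -> MMD e v w2 -> w1 = w2.
Proof.
move=> vc w1c w2c vw1 vw2; have vV := MMD_VSR vw1.
have w1V : w1 \in VSR e by apply: (@MMD_VSR _ e _ v); rewrite MMD_sym.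
have w2V : w2 \in VSR e by apply: (@MMD_VSR _ e _ v); rewrite MMD_sym.
rewrite f_MMD // in vw1; rewrite f_MMD // in vw2.
apply: f_inj => //; apply: (Hrel_partner_unique _ _ _ vw1 vw2); exact: f_neq_None.
Qed.

Lemma MMD_hub_two_partners : (0 < a) || (1 < b) ->
  exists w1 w2, [/\ MMD e c w1, MMD e c w2 & w1 != w2].
Proof.
move=> ab; have [y1 [y2 [y1N y2N y12]]] := HV_two_leaves ab.
have [w1 w1V fw1] := f_onto y1; have [w2 w2V fw2] := f_onto y2.
exists w1, w2; rewrite !f_MMD // fc fw1 fw2 !Hrel_hub //; split=> //.
by apply: contra_neq y12 => w12; rewrite -fw1 -fw2 w12.
Qed.

End Isomorphism.

Theorem mainTheorem10 (T : finType) (e : rel T) (a b : nat) :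
  simple_graph e -> connected_graph e ->
  ((1 <= a)%N \/ (a = 0 /\ (2 <= b)%N)) ->
  GSR_iso e (Hrel a b) ->
  O_SR e = Out_N.
Proof.
move=> [e_sym _] e_conn ab [f [f_inj [f_onto f_MMD]]].
have [c cV fc] := f_onto None.
have /(MMD_hub_two_partners f_onto f_MMD cV fc) [w1 [w2 [cw1 cw2 w12]]] : (0 < a) || (1 < b).
  by case: ab => [|[]]; lia.
rewrite /O_SR (maker_wins_M_game_pairing e_sym e_conn (MMD_partner_unique f_inj f_MMD cV fc)).
by rewrite (negbTE (breaker_wins_B_game_two_partners e_sym e_conn cw1 cw2 w12)).
Qed.
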